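(* $\mathcal{L}_{AIL}\not\preceq\mathcal{L}_{FH}$: there exists $\psi\in\mathcal{L}_{AIL}$ such that no $\varphi\in\mathcal{L}_{FH}$ satisfies, for every epistemic model with awareness $M$ and every world $w$ of $M$, $M,w\vDash_{AIL}\psi$ iff $M,w\vDash_{FH}\varphi$.
   Context: Let $\mathcal{P}$ be a countable set of atoms and $\mathcal{G}$ a finite set of agents. An epistemic model with awareness is $M=\langle W,\{\sim_i,\mathscr{A}_i\}_{i\in\mathcal{G}},V\rangle$: $W\neq\emptyset$, $\sim_i$ an equivalence relation on $W$, $\mathscr{A}_i:W\to2^{\mathcal{P}}$ with $\mathscr{A}_i(w)=\mathscr{A}_i(v)$ whenever $(w,v)\in\sim_i$, $V:\mathcal{P}\to2^W$. $(w,v)\in\approx_i$ iff $\mathscr{A}_i(w)=\mathscr{A}_i(v)$ and $w,v$ agree on all $p\in\mathscr{A}_i(w)$. $\sim_i\circ\approx_i=\{(w,v):\exists t\,((w,t)\in\approx_i,(t,v)\in\sim_i)\}$; $R^+$ is the transitive closure. $\mathcal{L}_{AIL}$: $\varphi::=p\mid\neg\varphi\mid\varphi\wedge\varphi\mid A_i\varphi\mid I_i\varphi\mid E_i\varphi\mid[\approx]_i\varphi\mid[\circ^+]_i\varphi$; $\mathcal{L}_{FH}$ is the fragment without $[\approx]_i,[\circ^+]_i$. $\vDash_{AIL}$: $p$ iff $w\in V(p)$; Boolean usual; $A_i\varphi$ iff $At(\varphi)\subseteq\mathscr{A}_i(w)$ ($At$ = atoms occurring); $I_i\varphi$, $[\approx]_i\varphi$,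 $[\circ^+]_i\varphi$ iff $\varphi$ holds at all successors along $\sim_i$, $\approx_i$, $(\sim_i\circ\approx_i)^+$ respectively; $E_i\varphi$ iff $A_i\varphi$ and $[\circ^+]_i\varphi$ hold. $\vDash_{FH}$ on $\mathcal{L}_{FH}$ is the same except $E_i\varphi$ holds iff $A_i\varphi$ and $I_i\varphi$ hold. *)

From mathcomp Require Import all_boot.
From Stdlib Require Import Relations.


Set Implicit Arguments.
Unset Strict Implicit.
Unset Printing Implicit Defensive.

(* Atoms: the countable set P is taken to be nat. *)
Definition atom := nat.

Inductive ail (G : finType) : Type :=
| AAtom : atom -> ail G
| ANeg : ail G -> ail G
| AAnd : ail G -> ail G -> ail G
| AAw : G -> ail G -> ail G
| AImp : G -> ail G -> ail G
| AExp : G -> ail G -> ail G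
| ABoxApprox : G -> ail G -> ail G
| ABoxCirc : G -> ail G -> ail G.

Inductive fh (G : finType) : Type :=
| FAtom : atom -> fh G
| FNeg : fh G -> fh G
| FAnd : fh G -> fh G -> fh G
| FAw : G -> fh G -> fh G
| FImp : G -> fh G -> fh G
| FExp : G -> fh G -> fh G.

Fixpoint occ_ail (G : finType) (p : atom) (f : ail G) : Prop :=
  match f with
  | AAtom q => p = q
  | ANeg g => occ_ail p g
  | AAnd g h => occ_ail p g \/ occ_ail p h
  | AAw _ g | AImp _ g | AExp _ g | ABoxApprox _ g | ABoxCirc _ g => occ_ail p g
  end.

Fixpoint occ_fh (G : finType) (p : atom) (f : fh G) : Prop :=
  match f with
  | FAtom q => p = q
  | FNeg g => occ_fh p g
  | FAnd g h => occ_fh p g \/ occ_fh p h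
  | FAw _ g | FImp _ g | FExp _ g => occ_fh p g
  end.

Record model (G : finType) : Type := Model {
  W : Type;
  w_inhabited : inhabited W;
  sim : G -> relation W;
  sim_equiv : forall i, equivalence W (sim i);
  aw : G -> W -> atom -> Prop;
  aw_sim : forall i w v, sim i w v -> aw i w = aw i v;
  val : atom -> W -> Prop
}.

Arguments W {G} m.
Arguments sim {G} m i.
Arguments aw {G} m i.
Arguments val {G} m p.

Section Sem.
Variable G : finType.
Variable M : model G.

Definition approx (i : G) (w v : W M) : Prop :=
  aw M i w = aw M i v /\ (forall p, aw M i w p -> (val M p w <-> val M p v)).

Definition circ (i : G) (w v : W M) : Prop :=
  exists t, approx i w t /\ sim M i t v.

Definition circ_plus (i : G) : relation (W M) := clos_trans (W M) (circ i).

Fixpoint sat_ail (w : W M) (f : ail G) : Prop :=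
  match f with
  | AAtom p => val M p w
  | ANeg g => ~ sat_ail w g
  | AAnd g h => sat_ail w g /\ sat_ail w h
  | AAw i g => forall p, occ_ail p g -> aw M i w p
  | AImp i g => forall v, sim M i w v -> sat_ail v g
  | AExp i g => (forall p, occ_ail p g -> aw M i w p) /\
                (forall v, circ_plus i w v -> sat_ail v g)
  | ABoxApprox i g => forall v, approx i w v -> sat_ail v g
  | ABoxCirc i g => forall v, circ_plus i w v -> sat_ail v g
  end.

Fixpoint sat_fh (w : W M) (f : fh G) : Prop :=
  match f with
  | FAtom p => val M p w
  | FNeg g => ~ sat_fh w g
  | FAnd g h => sat_fh w g /\ sat_fh w h
  | FAw i g => forall p, occ_fh p g -> aw M i w p
  | FImp i g => forall v, sim M i w v -> sat_fh v g
  | FExp i g => (forall p, occ_fh p g -> aw M i w p) /\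
                (forall v, sim M i w v -> sat_fh v g)
  end.
End Sem.

Arguments sat_ail {G} M w f.
Arguments sat_fh {G} M w f.

From Pilot Require Import Defs.
From mathcomp Require Import all_boot.
From Stdlib Require Import Relations Setoid.

Set Implicit Arguments.
Unset Strict Implicit.
Unset Printing Implicit Defensive.

(* Formulas of L_FH only see the awareness sets, the valuation and the
   relations ~_i, so they are invariant under bisimulations for these data.
   [≈]_i, however, quantifies over worlds that merely look alike to an agent
   who is aware of nothing: with empty awareness and ~_i the identity, the
   two-world model with p true at one world is bisimilar to the one-world
   model where p holds, yet [≈]_i p fails in the first and holds in the second. *)

Section FHBisimulation.
Variables (G : finType) (M N : model G).

Record fh_bisimulation (Z : W M -> W N -> Prop) : Prop := {
  bisim_val : forall w u, Z w u -> forall p, Defs.val M p w <-> Defs.val N p u;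
  bisim_aw : forall w u, Z w u -> forall i, aw M i w = aw N i u;
  bisim_forth : forall w u i v, Z w u -> sim M i w v ->
    exists2 v', sim N i u v' & Z v v';
  bisim_back : forall w u i v', Z w u -> sim N i u v' ->
    exists2 v, sim M i w v & Z v v'
}.

Lemma sat_fh_bisim (Z : W M -> W N -> Prop) (phi : fh G) w u :
  fh_bisimulation Z -> Z w u -> sat_fh M w phi <-> sat_fh N u phi.
Proof.
move=> [Zval Zaw Zforth Zback].
have Zbox : forall (f : fh G) i x y, Z x y ->
    (forall x' y', Z x' y' -> sat_fh M x' f <-> sat_fh N y' f) ->
    (forall x', sim M i x x' -> sat_fh M x' f) <->
    (forall y', sim N i y y' -> sat_fh N y' f).
  move=> f i x y Zxy IH; split=> [Hx y' yy' | Hy x' xx'].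
  - by have [x' xx' Z'] := Zback _ _ _ _ Zxy yy'; rewrite -(IH _ _ Z'); apply: Hx.
  - by have [y' yy' Z'] := Zforth _ _ _ _ Zxy xx'; rewrite (IH _ _ Z'); apply: Hy.
elim: phi w u => [p | f IH | f IHf g IHg | i f IH | i f IH | i f IH] w u Zwu /=.
- exact: Zval.
- by rewrite (IH _ _ Zwu).
- by rewrite (IHf _ _ Zwu) (IHg _ _ Zwu).
- by rewrite (Zaw _ _ Zwu).
- exact: Zbox.
- by rewrite (Zaw _ _ Zwu) (Zbox _ _ _ _ Zwu IH).
Qed.

End FHBisimulation.

Section UnawareDiscreteModel.
Variables (G : finType) (T : Type) (t0 : T) (V : atom -> T -> Prop).

Definition unaware_discrete_model : model G :=
  @Model G T (inhabits t0) (fun _ => @eq T) (fun _ => @inverse_image_of_eq T T id)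
    (fun _ _ _ => False) (fun _ _ _ _ => erefl) V.

Lemma approx_unaware_discrete i (w v : T) :
  approx (M := unaware_discrete_model) i w v.
Proof. by split=> // p []. Qed.

End UnawareDiscreteModel.

Section Counterexample.
Variable G : finType.

Definition two_worlds : model G :=
  unaware_discrete_model G true (fun _ w => w = true).

Definition one_world : model G :=
  unaware_discrete_model G tt (fun _ _ => True).

Lemma two_worlds_one_world_bisim :
  fh_bisimulation (fun (w : W two_worlds) (_ : W one_world) => w = true).
Proof.
split=> /= [w u -> // | // | w u _ v -> <- | w [] _ [] -> _].
- by exists u.
- by exists true.
Qed.

Lemma two_worlds_not_box_approx i :
  ~ sat_ail two_worlds true (ABoxApprox i (AAtom G 0)).
Proof. by move=> /= /(_ false (approx_unaware_discrete _ _ _ _ _)). Qed.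

Lemma one_world_box_approx i :
  sat_ail one_world tt (ABoxApprox i (AAtom G 0)).
Proof. by []. Qed.

End Counterexample.

Theorem lemma4 (G : finType) (i0 : G) :
  exists psi : ail G, forall phi : fh G,
    ~ (forall (M : model G) (w : W M), sat_ail M w psi <-> sat_fh M w phi).
Proof.
exists (ABoxApprox i0 (AAtom G 0)) => phi equiv_psi_phi.
have fh_agree : sat_fh (two_worlds G) true phi <-> sat_fh (one_world G) tt phi.
  exact: sat_fh_bisim (two_worlds_one_world_bisim G) (erefl true).
apply: (two_worlds_not_box_approx (i := i0)).
exact/equiv_psi_phi/fh_agree/equiv_psi_phi/one_world_box_approx.
Qed.
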